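(* With $\iota^\sharp\colon FL_H \to FL_G$, $\pi_1,\pi_2\colon FL_H \to \mathbf{P}^1$ and the cells as in the context, one has \[ (\iota^\sharp)^{-1}\left(X^G_{w_2}\right) \cap \pi_2^{-1}\left(Y^{\mathrm{GL}_2}_{w}\right) = (\iota^\sharp)^{-1}\left(C^G_{w_2}\right) \cap \pi_1^{-1}\left(C^{\mathrm{GL}_2}_w \cdot w^{-1}\right) \cap \pi_2^{-1}\left(C^{\mathrm{GL}_2}_{w}\right). \]
   Context: Let $G = \mathrm{GSp}_4$ be the group of $4\times 4$ matrices $g$ with $g^t J g = \nu(g) J$ for a scalar $\nu(g)$, where $J$ is the anti-diagonal matrix with anti-diagonal entries $(1,1,-1,-1)$ (reading rows top to bottom). Let $P \subset G$ be the Siegel parabolic (elements whose bottom-left $2\times2$ block is zero), $B_G$ the upper-triangular Borel, and $FL_G = P\backslash G$. For $g\in G$ let $c(g)$ be its bottom-left $2\times 2$ block; its row span depends only on $Pg$. The $B_G$-orbits on $FL_G$ are $C^G_{w_0},\dots,C^G_{w_3}$: $c(g)=0$; $c(g)$ of rank $1$ with row span $\langle(0,1)\rangle$; $c(g)$ of rank $1$ with row span $\neq\langle(0,1)\rangle$; $c(g)$ of rank $2$, respectively. Set $X^G_{w_2} = C^G_{w_0}\cup C^G_{w_1}\cup C^G_{w_2}$ (the closed locus where $c(g)$ is singular). For $\mathrm{GL}_2$ with upper-triangular Borel $B$, identify $B\backslash\mathrm{GL}_2 \cong \mathbf{P}^1$ by sending $Bg$ to the bottom row $(x:y)$ of $g$.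 Let $w = \begin{pmatrix}0&1\\-1&0\end{pmatrix}$. The Bruhat cells are $C^{\mathrm{GL}_2}_{\mathrm{id}} = \{(0:1)\}$ and $C^{\mathrm{GL}_2}_w = \{(x:y) : x \neq 0\}$; $Y^{\mathrm{GL}_2}_w = C^{\mathrm{GL}_2}_w$ (union of cells $\geq w$), and $C^{\mathrm{GL}_2}_w\cdot w^{-1} = B\backslash B\overline{B} = \{(x:y): y\neq 0\}$ with $\overline{B}$ the lower-triangular Borel. Let $H = \mathrm{GL}_2\times_{\mathrm{GL}_1}\mathrm{GL}_2$, $B_H$ its upper-triangular Borel, $FL_H = B_H\backslash H \cong \mathbf{P}^1\times\mathbf{P}^1$, with projections $\pi_1,\pi_2$ to the two factors. Let $\iota\colon H\to G$ be $\left[\begin{pmatrix}a&b\\c&d\end{pmatrix},\begin{pmatrix}a'&b'\\c'&d'\end{pmatrix}\right] \mapsto \begin{pmatrix}a&0&0&b\\0&a'&b'&0\\0&c'&d'&0\\c&0&0&d\end{pmatrix}$, and $\iota^\sharp\colon FL_H\to FL_G$, $B_Hh\mapsto P\iota(h)\tau^\sharp$, where $\tau^\sharp = \iota(\mathrm{id},w)^{-1}\tau w_2$, $\tau = \begin{pmatrix}1&0&0&0\\1&1&0&0\\0&0&1&0\\0&0&-1&1\end{pmatrix}$, and $w_2$ is the Kostant representative of $C^G_{w_2}$; explicitly $\iota^\sharp((x:y),(X:Y)) = Pg$ for some $g\in G$ with $c(g) = \begin{pmatrix}-X&Y\\-y&x\end{pmatrix}$. *)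

From mathcomp Require Import all_boot all_algebra.
Set Implicit Arguments. Unset Strict Implicit. Unset Printing Implicit Defensive.
Import GRing.Theory.
Local Open Scope ring_scope.

(* Points of P^1 = B\GL_2 are represented by nonzero row vectors (x : y)
   (coordinate 0 = x, coordinate 1 = y); all predicates below are invariant
   under nonzero scaling. *)
Definition p1pt (F : fieldType) (v : 'rV[F]_2) : Prop := v != 0.

Definition inC_w (F : fieldType) (v : 'rV[F]_2) : bool := v 0 0 != 0.
Definition inY_w (F : fieldType) (v : 'rV[F]_2) : bool := inC_w v.
Definition inC_w_winv (F : fieldType) (v : 'rV[F]_2) : bool := v 0 1 != 0.

Definition e01 (F : fieldType) : 'rV[F]_2 := \row_(j < 2) (if j == 1 then 1 else 0).

(* B_G-orbits on FL_G, described through the bottom-left block c(g). *)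
Definition inCG0 (F : fieldType) (c : 'M[F]_2) : bool := c == 0.
Definition inCG1 (F : fieldType) (c : 'M[F]_2) : bool :=
  (\rank c == 1)%N && (c == e01 F)%MS.
Definition inCG2 (F : fieldType) (c : 'M[F]_2) : bool :=
  (\rank c == 1)%N && ~~ (c == e01 F)%MS.
Definition inCG3 (F : fieldType) (c : 'M[F]_2) : bool := (\rank c == 2)%N.
Definition inXG_w2 (F : fieldType) (c : 'M[F]_2) : bool :=
  [|| inCG0 c, inCG1 c | inCG2 c].

(* Bottom-left block of a representative of iota^sharp((x:y),(X:Y)):
   c = [[-X, Y], [-y, x]]. *)
Definition iota_sharp_c (F : fieldType) (p q : 'rV[F]_2) : 'M[F]_2 :=
  \matrix_(i < 2, j < 2)
    if i == 0 then (if j == 0 then - q 0 0 else q 0 1)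
    else (if j == 0 then - p 0 1 else p 0 0).

From mathcomp Require Import all_boot all_algebra.
Set Implicit Arguments. Unset Strict Implicit. Unset Printing Implicit Defensive.
Import GRing.Theory.
Local Open Scope ring_scope.

(* Once X <> 0, the first row (-X, Y) of c = [[-X, Y], [-y, x]] is not in the
   line <(0,1)>, so c lies in X_{w_2} exactly when it is singular, and then
   c(g) is of rank one and not in C_{w_1}.  Singularity means X x = Y y; were
   y = 0, this would force x = 0 and hence (x : y) = 0, which is not a point. *)

Lemma det_mx22 (R : comPzRingType) (A : 'M[R]_2) :
  \det A = A 0 0 * A 1 1 - A 0 1 * A 1 0.
Proof.
rewrite (expand_det_row _ 0) !big_ord_recl big_ord0 addr0 /cofactor !det_mx11.
rewrite !mxE /= expr0 expr1 !mul1r mulN1r mulrN.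
by congr (A _ _ * A _ _ - A _ _ * A _ _); apply/val_inj.
Qed.

Lemma rV2_eq0 (R : zmodType) (v : 'rV[R]_2) :
  (v == 0) = (v 0 0 == 0) && (v 0 1 == 0).
Proof.
apply/eqP/andP => [-> | [/eqP v0 /eqP v1]]; first by rewrite !mxE.
apply/rowP => -[[|[|//]] ?]; rewrite mxE; [rewrite -v0 | rewrite -v1];
  by congr (v 0 _); apply/val_inj.
Qed.

Section SingularLocus.

Variable F : fieldType.
Implicit Types (c : 'M[F]_2) (p q : 'rV[F]_2).

Lemma inXG_w2E c : inXG_w2 c = (\det c == 0).
Proof.
rewrite /inXG_w2 /inCG0 /inCG1 /inCG2 -andb_orr orbN andbT -mxrank_eq0.
rewrite -[\det c == 0]negbK -unitfE -unitmxE -row_free_unit /row_free.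
by have := rank_leq_row c; case: (\rank c) => [|[|[|]]].
Qed.

Lemma submx_e01_col0 m (A : 'M[F]_(m, 2)) i : (A <= e01 F)%MS -> A i 0 = 0.
Proof.
case/submxP=> D ->; rewrite !mxE big1 // => k _.
by rewrite !mxE mulr0.
Qed.

Lemma inCG2E c : c 0 0 != 0 -> inCG2 c = inXG_w2 c.
Proof.
move=> c00; have c_neq0 : c != 0 by apply: contraNneq c00 => ->; rewrite mxE.
rewrite /inXG_w2 /inCG0 /inCG1 (negbTE c_neq0) /=.
suff -> : (c <= e01 F)%MS = false by rewrite andbF.
by apply: contraNF c00 => /submx_e01_col0 ->.
Qed.

Lemma iota_sharp_c00 p q : iota_sharp_c p q 0 0 = - q 0 0.
Proof. by rewrite mxE. Qed.

Lemma det_iota_sharp_c p q :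
  \det (iota_sharp_c p q) = q 0 1 * p 0 1 - q 0 0 * p 0 0.
Proof. by rewrite det_mx22 !mxE /= mulrN mulNr opprK addrC. Qed.

Lemma iota_sharp_c_singular_p01_neq0 p q :
  p != 0 -> q 0 0 != 0 -> \det (iota_sharp_c p q) = 0 -> p 0 1 != 0.
Proof.
move=> p_neq0 X_neq0; rewrite det_iota_sharp_c.
apply: contra_eqN => /eqP y0.
rewrite y0 mulr0 sub0r oppr_eq0 mulf_eq0 (negbTE X_neq0) /=.
by apply: contraNN p_neq0 => x0; rewrite rV2_eq0 x0 y0 eqxx.
Qed.

End SingularLocus.

Theorem mainTheorem2 (F : fieldType) (p q : 'rV[F]_2) :
  p1pt p -> p1pt q ->
  (inXG_w2 (iota_sharp_c p q) && inY_w q) =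
  [&& inCG2 (iota_sharp_c p q), inC_w_winv p & inC_w q].
Proof.
move=> p_pt _; rewrite /inY_w /inC_w.
have [|X_neq0] := eqVneq (q 0 0) 0; first by rewrite !andbF.
rewrite !andbT inCG2E ?iota_sharp_c00 ?oppr_eq0 // inXG_w2E.
have [sing|] //= := eqVneq (\det (iota_sharp_c p q)) 0.
by rewrite /inC_w_winv (iota_sharp_c_singular_p01_neq0 p_pt X_neq0 sing).
Qed.
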